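(* Let $1\le n\le l$ be integers, put $c=2^l-3^n$ and $r=\gcd(l,n)$. Let $s\in S_{l,n}$ and consider the integer $3n+c$ cycle associated with $s$, whose elements are the integers $\varphi(t)$ for $t\in\sigma(s)$; its odd elements are the values $\varphi(t)$ with $t\in\sigma(s)$ and $t_1=1$. Then $$\min_{t\in\sigma(s)}\varphi(t)\le M_{l,n}\qquad\text{and}\qquad N_{l,n}\le \max\{\varphi(t): t\in\sigma(s),\ t_1=1\},$$ where $$N_{l,n}=2M_{l,n}-\sum_{i=0}^{r-1}2^{\,i l/r}\,3^{\,n-1-i n/r}.$$
   Context: $S_{l,n}$ denotes the set of 0-1 sequences $s=(s_1,\ldots,s_l)$ of length $l$ with exactly $n$ ones. For such $s$, $$\varphi(s)=\sum_{j=1}^{l} s_j\, 3^{\,s_{j+1}+\cdots+s_{l}}\,2^{\,j-1}.$$ The left shift is $\lambda_l(s_1,\ldots,s_l)=(s_2,\ldots,s_l,s_1)$ and $\sigma(s)=\{\lambda_l^k(s):k=1,\ldots,l\}$ is the orbit of $s$ under rotation. $M_{l,n}=\max_{s\in S_{l,n}}\min_{t\in\sigma(s)}\varphi(t)$. For an odd integer $c$, the $3n+c$ map on integers sends $x$ to $(3x+c)/2$ if $x$ is odd and to $x/2$ if $x$ is even. With $c=2^l-3^n$, the sequence $x_i=\varphi(\lambda_l^i(s))$, $i=0,\ldots,l$, is a cycle of this map of length $l$ (obtained by multiplying by $c$ the rational Collatz cycle through $\varphi(s)/(2^l-3^n)$), in which $x_i$ is odd exactly when the first entry of $\lambda_l^i(s)$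 is $1$; this cycle is called the $3n+c$ cycle corresponding to $s$ (it need not be primitive, i.e. its elements may share a common divisor). *)

From mathcomp Require Import all_boot all_order all_algebra.
Set Implicit Arguments. Unset Strict Implicit. Unset Printing Implicit Defensive.

(* 0-1 sequences are represented as seq bool (true = 1).
   Indices are 0-based: the paper's s_j is nth false s (j-1). *)

Definition phi (s : seq bool) : nat :=
  \sum_(j < size s) (nth false s j) * 3 ^ (count id (drop j.+1 s)) * 2 ^ j.

Definition lshift (s : seq bool) : seq bool := rot 1 s.

Definition lshiftn (k : nat) (s : seq bool) : seq bool := iter k lshift s.

Definition sigma_orbit (s : seq bool) : seq (seq bool) :=
  [seq lshiftn k s | k <- iota 1 (size s)].

(* min_{t in sigma(s)} phi(t); the seed phi s is itself attained at k = l. *)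
Definition minphi (s : seq bool) : nat :=
  \big[minn/phi s]_(t <- sigma_orbit s) phi t.

(* max { phi(t) : t in sigma(s), t_1 = 1 } (0 if there is no such t). *)
Definition maxodd (s : seq bool) : nat :=
  \max_(t <- sigma_orbit s | head false t) phi t.

Definition inS (l n : nat) (s : l.-tuple bool) : bool := count id s == n.

Definition M (l n : nat) : nat :=
  \max_(s : l.-tuple bool | inS n s) minphi s.

Definition N (l n : nat) : int :=
  let r := gcdn l n in
  (2 * (M l n)%:Z - \sum_(i < r) (2 ^ (i * l %/ r) * 3 ^ (n - 1 - i * n %/ r))%:Z)%R.

From Pilot Require Import Defs.
From mathcomp Require Import all_boot all_order all_algebra.
From mathcomp Require Import zify.
Import Order.TTheory.

Set Implicit Arguments.
Unset Strict Implicit.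
Unset Printing Implicit Defensive.

(* The bound minphi s <= M l n holds because M is a maximum over S_{l,n}.
   For the other bound, write a word t through the positions
   p_0 < ... < p_{n-1} of its ones: phi t = psi p := sum_i 3^(n-1-i) 2^(p_i).
   By the cycle lemma, every s' in S_{l,n} has a rotation whose prefixes lie
   on or above the line of slope n/l, so its ones satisfy q_i n <= i l; and
   s has a rotation starting with a one whose remaining prefixes lie on or
   below that line, so its ones satisfy i l <= p_i n.  Termwise this gives
   2^(q_i+1) <= 2^(p_i), except when q_i = p_i = i l / n, which needs
   n | i l; these exceptional terms sum to
   corr l n = sum_{k < r} 2^(k l/r) 3^(n-1-k n/r), r = gcd(l, n).  Hence
   2 minphi s' <= maxodd s + corr l n for all s', and maximizing over s'
   yields N_{l,n} <= maxodd s. *)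

Fixpoint ones (t : seq bool) : seq nat :=
  if t is b :: t' then
    if b then 0 :: map succn (ones t') else map succn (ones t')
  else [::].

Lemma size_ones t : size (ones t) = count id t.
Proof. by elim: t => //= b t IH; case: b; rewrite /= size_map IH. Qed.

Lemma nth_ones t i : i < count id t ->
  let p := nth 0 (ones t) i in
  [/\ p < size t, count id (take p t) = i & count id (take p.+1 t) = i.+1].
Proof.
rewrite -size_ones; elim: t i => [|b t IH] i //=.
case: b => /=; last first.
  rewrite size_map => lt_i; have [lt_p cnt cnt1] := IH i lt_i.
  by rewrite (nth_map 0) //= cnt cnt1.
case: i => [|i] /=; first by rewrite take0.
rewrite size_map ltnS => lt_i; have [lt_p cnt cnt1] := IH i lt_i.
by rewrite (nth_map 0) //= cnt cnt1.
Qed.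

(* The value of phi expressed through the positions p_0 < ... < p_{k-1} of
   the ones: the i-th one is followed by k-1-i further ones. *)
Definition psi (p : seq nat) : nat :=
  \sum_(i < size p) 3 ^ (size p - 1 - i) * 2 ^ (nth 0 p i).

Lemma psi_cons x p : psi (x :: p) = 3 ^ (size p) * 2 ^ x + psi p.
Proof.
rewrite /psi /= big_ord_recl /= subn1 subn0; congr (_ + _).
by apply: eq_bigr => i _; rewrite /bump /= add0n subnDA.
Qed.

Lemma psi_map_succ p : psi (map succn p) = 2 * psi p.
Proof.
rewrite /psi size_map big_distrr /=; apply: eq_bigr => i _.
by rewrite (nth_map 0) // expnS mulnCA.
Qed.

Lemma phi_cons (b : bool) t : phi (b :: t) = b * 3 ^ (count id t) + 2 * phi t.
Proof.
rewrite /phi /= big_ord_recl /= drop0 muln1; congr (_ + _).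
by rewrite big_distrr /=; apply: eq_bigr => i _; rewrite expnS mulnCA.
Qed.

Lemma phi_ones t : phi t = psi (ones t).
Proof.
elim: t => [|b t IH]; first by rewrite /phi /psi !big_ord0.
rewrite phi_cons IH /=; case: b; rewrite ?psi_cons psi_map_succ ?size_map //.
by rewrite size_ones mul1n expn0 muln1.
Qed.

Lemma lshiftn_rot k s : k <= size s -> lshiftn k s = rot k s.
Proof.
elim: k => [|k IH] Hk; first by rewrite rot0.
by rewrite /lshiftn iterS -/(lshiftn k s) IH ?(ltnW Hk) // /Defs.lshift -rotD ?add1n.
Qed.

Lemma count_rot (T : Type) (a : pred T) k s : count a (rot k s) = count a s.
Proof. by rewrite /rot count_cat addnC -count_cat cat_take_drop. Qed.

Lemma mem_orbit_rot s k : 0 < size s -> rot k s \in sigma_orbit s.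
Proof.
move=> s0; have in_orbit j : 0 < j <= size s -> rot j s \in sigma_orbit s.
  by move=> /andP [j0 js]; rewrite -lshiftn_rot //; apply: map_f; rewrite mem_iota; lia.
have [/in_orbit //|Hk] := boolP (0 < k <= size s).
have -> : rot k s = rot (size s) s.
  rewrite rot_size; case: k Hk => [|k]; rewrite ?rot0 //= -ltnNge => Hk.
  by rewrite rot_oversize // ltnW.
by apply: in_orbit; rewrite s0 leqnn.
Qed.

Lemma count_orbit s t : t \in sigma_orbit s -> count id t = count id s.
Proof.
case/mapP=> k; rewrite mem_iota add1n ltnS => /andP [_ k_le] ->.
by rewrite lshiftn_rot // count_rot.
Qed.

Lemma count_take_rot (T : Type) (a : pred T) s k m : k <= size s -> m <= size s ->
  count a (take m (rot k s)) + count a (take k s) =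
  if k + m <= size s then count a (take (k + m) s)
  else count a s + count a (take (k + m - size s) s).
Proof.
move=> k_le m_le; rewrite /rot; case: leqP => km.
  by rewrite takel_cat ?size_drop 1?leq_subRL // takeD count_cat addnC.
rewrite take_cat size_drop ifF; last lia.
rewrite take_takel; last lia.
have -> : m - (size s - k) = k + m - size s by lia.
have := count_cat a (take k s) (drop k s).
by rewrite cat_take_drop count_cat; lia.
Qed.

(* Take the rotation starting where the
   "excess" C(j) size s - j count s of the prefix counts C(j) is minimal. *)
Lemma rotation_above (s : seq bool) : exists2 k, k <= size s &
  forall m, m <= size s -> m * count id s <= count id (take m (rot k s)) * size s.
Proof.
pose G (j : 'I_(size s).+1) := count id (take j s) * size s + (size s - j) * count id s.
have [k _ k_min] := @arg_minnP _ ord0 xpredT G isT.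
have k_le : k <= size s by rewrite -ltnS.
exists k => // m m_le; have := count_take_rot id k_le m_le.
case: leqP => [km_le | km_gt] E.
  by have := k_min (inord (k + m)) isT; rewrite /G inordK ?ltnS //; nia.
have := k_min (inord (k + m - size s)) isT; rewrite /G inordK; nia.
Qed.

(* Dually, some rotation has all its prefixes on or below that line: apply
   the cycle lemma to the complemented word. *)
Lemma rotation_below (s : seq bool) : exists2 k, k <= size s &
  forall m, m <= size s -> count id (take m (rot k s)) * size s <= m * count id s.
Proof.
have [k k_le above] := rotation_above (map negb s).
rewrite size_map in k_le above; exists k => // m m_le; have := above m m_le; rewrite -map_rot -map_take !count_map.
have cnt_neg t : count (preim negb id) t = size t - count id t.
  by rewrite -(count_predC id t) addKn.
rewrite !cnt_neg size_takel ?size_rot //.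
have : count id (take m (rot k s)) <= m.
  by rewrite -{2}(@size_takel m _ (rot k s)) ?size_rot //; exact: count_size.
have := count_size id s; nia.
Qed.

(* A nonzero word whose prefixes all lie on or below the line must end with
   a one: otherwise the prefix omitting the last letter already holds all
   the ones and lies strictly above the line. *)
Lemma below_last_one (v : seq bool) : 0 < count id v ->
  (forall m, m <= size v -> count id (take m v) * size v <= m * count id v) ->
  exists b, v = rcons b true.
Proof.
case/lastP: v => [|b x] // c0 below; exists b; congr rcons; move: c0 below.
rewrite -cats1 count_cat size_cat /= => c0 /(_ (size b) (leq_addr _ _)).
rewrite takel_cat // take_size; case: x c0 => //=; rewrite !addn0; nia.
Qed.

Lemma rotation_one_below (s : seq bool) : 0 < count id s ->
  exists2 b, true :: b \in sigma_orbit s &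
  forall m, m <= size b -> count id (take m b) * size s <= m * count id s.
Proof.
move=> c0; have s0 : 0 < size s by apply: leq_trans c0 (count_size _ _).
have [k k_le below] := rotation_below s.
have [b Eb] : exists b, rot k s = rcons b true.
  by apply: below_last_one; rewrite ?count_rot ?size_rot.
exists b.
  have <- : rotr 1 (rot k s) = true :: b by rewrite Eb rotr1_rcons.
  by rewrite /rotr size_rot rot_add_mod ?leq_subr // mem_orbit_rot.
move=> m m_le; have := below m.
have size_b : size s = (size b).+1 by rewrite -(size_rot k) Eb size_rcons.
by rewrite Eb -cats1 takel_cat // size_b => /(_ (leqW m_le)).
Qed.

Lemma ones_above (u : seq bool) l n :
  (forall m, m <= size u -> m * n <= count id (take m u) * l) ->
  forall i, i < count id u -> nth 0 (ones u) i * n <= i * l.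
Proof. by move=> u_above i /nth_ones [p_lt p_cnt _]; rewrite -{2}p_cnt u_above // ltnW. Qed.

Lemma ones_below (b : seq bool) l n :
  (forall m, m <= size b -> count id (take m b) * l <= m * n) ->
  forall i, i < count id (true :: b) -> i * l <= nth 0 (ones (true :: b)) i * n.
Proof.
move=> b_below i /nth_ones [p_lt _]; rewrite /= add1n => -[p_cnt].
by rewrite -{1}p_cnt b_below.
Qed.

Lemma minphi_le_psi (s : seq bool) : 0 < size s ->
  exists2 q, size q = count id s /\
    (forall i, i < count id s -> nth 0 q i * count id s <= i * size s)
  & minphi s <= psi q.
Proof.
move=> s0; have [k _ above] := rotation_above s.
exists (ones (rot k s)); first split.
- by rewrite size_ones count_rot.
- by rewrite -(count_rot _ k); apply: ones_above; rewrite size_rot count_rot.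
- by rewrite /minphi -phi_ones; exact: (ge_bigmin_seq _ _ xpredT phi (mem_orbit_rot k s0)).
Qed.

Lemma psi_le_maxodd (s : seq bool) : 0 < count id s ->
  exists2 p, size p = count id s /\
    (forall i, i < count id s -> i * size s <= nth 0 p i * count id s)
  & psi p <= maxodd s.
Proof.
move=> c0; have [b b_orbit b_below] := rotation_one_below c0.
have cnt_b := count_orbit b_orbit.
exists (ones (true :: b)); first split.
- by rewrite size_ones.
- by move=> i; rewrite -{1}cnt_b; exact: ones_below.
- by rewrite -phi_ones; exact: (leq_bigmax_seq _ b_orbit isT).
Qed.

(* Exceptional terms: the i-th one may sit exactly on the line, at position
   i * l / n, only when n divides i * l. *)
Definition corr (l n : nat) : nat :=
  \sum_(i < n) (if n %| i * l then 3 ^ (n - 1 - i) * 2 ^ (i * l %/ n) else 0).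

Lemma pow2_step a b i l n : 0 < n -> a * n <= i * l -> i * l <= b * n ->
  2 ^ a.+1 <= 2 ^ b + (if n %| i * l then 2 ^ (i * l %/ n) else 0).
Proof.
move=> n0 a_le b_ge; case: (ltnP a b) => [ab | ba].
  by rewrite (leq_trans _ (leq_addr _ _)) // leq_pexp2l.
have ab : a = b by apply/eqP; rewrite eqn_leq ba -(leq_pmul2r n0) (leq_trans a_le).
have il : i * l = b * n by apply/eqP; rewrite eqn_leq b_ge -ab a_le.
by rewrite il dvdn_mull // mulnK // ab expnS mul2n -addnn.
Qed.

Lemma psi_compare (p q : seq nat) l n : size p = n -> size q = n ->
  (forall i, i < n -> nth 0 q i * n <= i * l) ->
  (forall i, i < n -> i * l <= nth 0 p i * n) ->
  2 * psi q <= psi p + corr l n.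
Proof.
move=> size_p size_q q_le p_ge; rewrite /psi size_p size_q big_distrr -big_split /=.
apply: leq_sum => i _; have n0 : 0 < n by apply: leq_ltn_trans (ltn_ord i).
have := pow2_step n0 (q_le i (ltn_ord i)) (p_ge i (ltn_ord i)).
rewrite -(leq_pmul2l (expn_gt0 3 (n - 1 - i))) mulnDr expnS mulnCA.
by case: ifP; rewrite ?muln0.
Qed.

(* With r = gcd(l, n), the fractions n / r and l / r are coprime, so n
   divides i * l exactly when n / r divides i. *)
Lemma dvdn_mul_gcd l n i : 0 < n -> (n %| i * l) = (n %/ gcdn l n %| i).
Proof.
move=> n0; set r := gcdn l n; have r0 : 0 < r by rewrite gcdn_gt0 n0 orbT.
have n_eq : n = n %/ r * r by rewrite divnK // dvdn_gcdr.
have l_eq : l = l %/ r * r by rewrite divnK // dvdn_gcdl.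
have cop : coprime (n %/ r) (l %/ r).
  by rewrite /coprime -(eqn_pmul2r r0) muln_gcdl -n_eq -l_eq mul1n gcdnC.
by rewrite {1}n_eq {1}l_eq mulnA dvdn_pmul2r // Gauss_dvdl.
Qed.

Lemma sum_over_multiples d m (h : nat -> nat) : 0 < d ->
  \sum_(i < m * d) (if d %| i then h i else 0) = \sum_(k < m) h (k * d).
Proof.
case: d => [//|d] _; elim: m => [|m IH]; first by rewrite mul0n !big_ord0.
rewrite mulSnr big_split_ord [RHS]big_ord_recr /= -IH; congr (_ + _).
rewrite big_ord_recl /= addn0 dvdn_mull // big1 ?addn0 // => j _.
rewrite dvdn_addr ?dvdn_mull // gtnNdvd // /bump leq0n add1n ltnS; exact: ltn_ord.
Qed.

Lemma corr_gcd l n : 0 < n ->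
  corr l n = \sum_(k < gcdn l n)
               2 ^ (k * l %/ gcdn l n) * 3 ^ (n - 1 - k * n %/ gcdn l n).
Proof.
move=> n0; set r := gcdn l n; set d := n %/ r.
have r0 : 0 < r by rewrite gcdn_gt0 n0 orbT.
have n_eq : r * d = n by rewrite mulnC divnK // dvdn_gcdr.
have d0 : 0 < d by move: n0; rewrite -n_eq muln_gt0 => /andP [].
rewrite /corr (eq_bigr (fun i : 'I_n => if d %| i then
                 3 ^ (n - 1 - i) * 2 ^ (i * l %/ n) else 0)); last first.
  by move=> i _; rewrite dvdn_mul_gcd.
have := sum_over_multiples r (fun i => 3 ^ (n - 1 - i) * 2 ^ (i * l %/ n)) d0.
rewrite n_eq => ->; apply: eq_bigr => k _.
by rewrite mulnC -n_eq mulnAC divnMr // [k * (r * d)]mulnCA mulKn.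
Qed.

Lemma twice_minphi_le (l n : nat) (s s' : seq bool) : 0 < n ->
  size s = l -> size s' = l -> count id s = n -> count id s' = n ->
  2 * minphi s' <= maxodd s + corr l n.
Proof.
move=> n0 size_s size_s' cnt_s cnt_s'.
have s'0 : 0 < size s' by rewrite (leq_trans n0) // -cnt_s' count_size.
have [q [size_q q_le] min_q] := minphi_le_psi s'0.
have s0 : 0 < count id s by rewrite cnt_s.
have [p [size_p p_ge] p_max] := psi_le_maxodd s0.
rewrite size_s' cnt_s' in size_q q_le; rewrite size_s cnt_s in size_p p_ge.
have := psi_compare size_p size_q q_le p_ge; lia.
Qed.

Theorem mainTheorem2 (l n : nat) (s : l.-tuple bool) :
  1 <= n -> n <= l -> count id s = n ->
  minphi s <= M l n /\ (N l n <= (maxodd s)%:Z)%R.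
Proof.
move=> n0 _ cnt_s; split.
  by apply: (@leq_bigmax_cond _ (inS n) (fun t => minphi t)); rewrite /inS cnt_s.
have M_le : M l n <= (maxodd s + corr l n) %/ 2.
  apply/bigmax_leqP => s' /eqP cnt_s'; rewrite leq_divRL // mulnC.
  by apply: twice_minphi_le; rewrite ?size_tuple.
rewrite leq_divRL // in M_le.
rewrite /N -(big_morph Posz PoszD (erefl (Posz 0))) -corr_gcd //; lia.
Qed.
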